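(* Assume (A7) and (A8) of the context. Then for every $\delta\in\mathbb{R}^D$ with $\|\delta\|\le\|\theta^*\|$, with probability $1-\delta_{n_q}$, $\|\nabla^2_\theta\ell(\theta^*+\delta)\|\le 2C_{\mathrm{ratio}}D_{\max,2}$.
   Context: Let $E=\{(u,v):1\le v\le u\le m\}$, $D=b|E|$, $\psi:\mathbb{R}^2\to\mathbb{R}^b$, and $f:\mathbb{R}^m\to\mathbb{R}^D$ the concatenation of the blocks $f_t(x)=\psi(x_u,x_v)$, $t=(u,v)\in E$; $f_S$ is the subvector of blocks in $S\subseteq E$. $P,Q$ are distributions on $\mathbb{R}^m$ with densities $p,q$; samples $x_p^{(1..n_p)}$ i.i.d. $P$ and $x_q^{(1..n_q)}$ i.i.d. $Q$. $r(x;\theta)=\exp(\theta^\top f(x))/N(\theta)$, $N(\theta)=\mathbb{E}_Q[\exp(\theta^\top f(x))]$; $\hat N(\theta)=\frac1{n_q}\sum_i\exp(\theta^\top f(x_q^{(i)}))$; $\hat r(x;\theta)=\exp(\theta^\top f(x))/\hat N(\theta)$; $\ell(\theta)=-\frac1{n_p}\sum_i\theta^\top f(x_p^{(i)})+\log\hat N(\theta)$. $\theta^*$ is the true parameter ($p=q\,r(\cdot;\theta^* )$), $S=\{t:\theta^*_t\neq0\}$. $\|\cdot\|$: Euclidean norm on vectors, spectral norm on matrices; $\Lambda_{\min}$ smallest eigenvalue. (A7) For all $\delta$ with $\|\delta\|\le\|\theta^*\|$ and all $x$: $0<C_{\min}\le r(x;\theta^*+\delta)\le C_{\max}<\infty$;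 moreover $\frac1{C_{\mathrm{ratio}}}\le\hat r(x;\theta^*+\delta)\le C_{\mathrm{ratio}}$ and $\|f_t(x)\|\le C_{f_t,\max}$ for constants. (A8) With probability 1: $\max_{t\in E}\frac1{n_q}\sum_i\|f_t(x_q^{(i)})\|\le D_{\max,1}<\infty$, $\|\frac1{n_q}\sum_if(x_q^{(i)})f(x_q^{(i)})^\top\|\le D_{\max,2}$ and $\|\widehat{\mathrm{Cov}}_q[f]\|\le D_{\max,2}<\infty$; with probability $1-\delta_{n_q}$, $\Lambda_{\min}(\widehat{\mathrm{Cov}}_q[f_S])\ge D_{\min,2}>0$; $\widehat{\mathrm{Cov}}_q$ is the sample covariance over the $Q$-sample. *)

From HB Require Import structures.
From mathcomp Require Import all_boot all_order all_algebra.
From mathcomp Require Import all_classical all_reals all_analysis.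
Set Implicit Arguments.
Unset Strict Implicit.
Unset Printing Implicit Defensive.
Import Order.TTheory GRing.Theory Num.Theory.
Import numFieldNormedType.Exports.
Local Open Scope classical_set_scope.
Local Open Scope ring_scope.

(* E = {(u,v) : 1 <= v <= u <= m}, here 0-indexed: v <= u < m *)
Definition Etype (m : nat) := {p : 'I_m * 'I_m | (p.2 <= p.1)%N}.
(* coordinates of theta / f(x): pairs (block t, position k in block) *)
Definition Idx (m b : nat) := (Etype m * 'I_b)%type.
Definition Dim (m b : nat) : nat := #|{: Idx m b}|.
Definition coord (m b : nat) (j : Idx m b) : 'I_(Dim m b) := enum_rank j.

Definition Rvec (R : realType) (m : nat) := 'rV[R]_m.
HB.instance Definition _ (R : realType) (m : nat) := Choice.on (Rvec R m).
HB.instance Definition _ (R : realType) (m : nat) := isPointed.Build (Rvec R m) 0.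

Definition coord_sets (R : realType) (m : nat) : set (set (Rvec R m)) :=
  fun A => exists (i : 'I_m) (B : set R), measurable B /\
                                        A = (fun x : 'rV[R]_m => x ord0 i) @^-1` B.
Notation Rm R m := (g_sigma_algebraType (@coord_sets R m)).

Definition vnorm (R : realType) (p q : nat) (M : 'M[R]_(p, q)) : R :=
  Num.sqrt (\sum_(i < p) \sum_(j < q) M i j ^+ 2).
Definition specnorm (R : realType) (n : nat) (A : 'M[R]_n) : R :=
  sup [set vnorm (A *m v) | v in [set v : 'cV[R]_n | vnorm v <= 1]].
Definition lambda_min (R : realType) (n : nat) (A : 'M[R]_n) : R :=
  inf [set a : R | eigenvalue A a].
Definition unitv (R : realType) (n : nat) (j : 'I_n) : 'rV[R]_n := delta_mx 0 j.
Definition hessian (R : realType) (n : nat) (g : 'rV[R]_n -> R) (th : 'rV[R]_n)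
  : 'M[R]_n :=
  \matrix_(j, k) derive (fun t => derive g t (@unitv R n k)) th (@unitv R n j).
Definition dotp (R : realType) (n : nat) (u v : 'rV[R]_n) : R :=
  \sum_(i < n) u ord0 i * v ord0 i.

Definition feat_t (R : realType) (m b : nat) (psi : R -> R -> 'rV[R]_b)
  (t : Etype m) (x : 'rV[R]_m) : 'rV[R]_b :=
  psi (x ord0 (sval t).1) (x ord0 (sval t).2).
Definition feat (R : realType) (m b : nat) (psi : R -> R -> 'rV[R]_b)
  (x : 'rV[R]_m) : 'rV[R]_(Dim m b) :=
  \row_(i < Dim m b) feat_t psi (enum_val i).1 x ord0 (enum_val i).2.
Definition Sidx (m b : nat) (S : {set Etype m}) : {set Idx m b} :=
  [set j : Idx m b | j.1 \in S].
Definition subvec (R : realType) (m b : nat) (S : {set Etype m})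
  (v : 'rV[R]_(Dim m b)) : 'rV[R]_#|Sidx b S| :=
  \row_(a < #|Sidx b S|) v ord0 (coord (enum_val a)).
Definition supp (R : realType) (m b : nat) (th : 'rV[R]_(Dim m b)) : {set Etype m} :=
  [set t : Etype m | [exists k : 'I_b, th ord0 (coord (t, k)) != 0]].

Definition N_model (R : realType) (m b : nat) (psi : R -> R -> 'rV[R]_b)
  (Q : probability (Rm R m) R) (th : 'rV[R]_(Dim m b)) : R :=
  Rintegral Q setT (fun x : Rm R m => expR (dotp th (feat psi x))).
Definition r_model (R : realType) (m b : nat) (psi : R -> R -> 'rV[R]_b)
  (Q : probability (Rm R m) R) (th : 'rV[R]_(Dim m b)) (x : 'rV[R]_m) : R :=
  expR (dotp th (feat psi x)) / N_model psi Q th.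
Definition Nhat (R : realType) (m b nq : nat) (psi : R -> R -> 'rV[R]_b)
  (xq : 'I_nq -> 'rV[R]_m) (th : 'rV[R]_(Dim m b)) : R :=
  (nq%:R)^-1 * \sum_(i < nq) expR (dotp th (feat psi (xq i))).
Definition rhat (R : realType) (m b nq : nat) (psi : R -> R -> 'rV[R]_b)
  (xq : 'I_nq -> 'rV[R]_m) (th : 'rV[R]_(Dim m b)) (x : 'rV[R]_m) : R :=
  expR (dotp th (feat psi x)) / Nhat psi xq th.
Definition loss (R : realType) (m b np nq : nat) (psi : R -> R -> 'rV[R]_b)
  (xp : 'I_np -> 'rV[R]_m) (xq : 'I_nq -> 'rV[R]_m) (th : 'rV[R]_(Dim m b)) : R :=
  - ((np%:R)^-1 * \sum_(i < np) dotp th (feat psi (xp i))) + ln (Nhat psi xq th).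

Definition emp_second (R : realType) (n nq : nat) (g : 'I_nq -> 'rV[R]_n) : 'M[R]_n :=
  (nq%:R)^-1 *: \sum_(i < nq) ((g i)^T *m g i).
Definition emp_mean (R : realType) (n nq : nat) (g : 'I_nq -> 'rV[R]_n) : 'rV[R]_n :=
  (nq%:R)^-1 *: \sum_(i < nq) g i.
Definition emp_cov (R : realType) (n nq : nat) (g : 'I_nq -> 'rV[R]_n) : 'M[R]_n :=
  (nq%:R)^-1 *: \sum_(i < nq) ((g i - emp_mean g)^T *m (g i - emp_mean g)).

Definition has_law (R : realType) (d d' : measure_display) (T : measurableType d)
  (T' : measurableType d') (Pr : probability T R) (X : T -> T')
  (P : probability T' R) : Prop :=
  measurable_fun setT X /\ forall A : set T', measurable A -> Pr (X @^-1` A) = P A.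
Definition mutually_indep (R : realType) (d d' : measure_display) (T : measurableType d)
  (T' : measurableType d') (I : finType) (Pr : probability T R) (X : I -> T -> T')
  : Prop :=
  forall A : I -> set T', (forall i, measurable (A i)) ->
    Pr (\bigcap_(i in [set: I]) (X i @^-1` A i)) =
    (\prod_(i : I) fine (Pr (X i @^-1` A i)))%:E.
Definition all_samples (T X : Type) (np nq : nat) (xp : 'I_np -> T -> X)
  (xq : 'I_nq -> T -> X) : 'I_np + 'I_nq -> T -> X :=
  fun k => match k with inl i => xp i | inr i => xq i end.

(* The Hessian of the loss at theta is the covariance matrix of the features
   f_i = f(x_q^(i)) under the Gibbs weights
   w_i = exp(theta . f_i) / sum_j exp(theta . f_j), and w_i = rhat(x_q^(i); theta) / n_q <= C_ratio / n_q by (A7).  A weighted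
   covariance is dominated by the weighted second moment, hence its quadratic form
   by C_ratio times that of the empirical second moment, whose norm is at most
   D_max,2 on the almost-sure event of (A8).  For the positive semidefinite
   covariance H, Cauchy-Schwarz for its bilinear form gives
   |H v|^4 <= <H v, H (H v)> <v, H v>, which turns the bound on the quadratic form
   into ||H|| <= C_ratio D_max,2, half the claimed bound.  The event of
   probability at least 1 - delta_nq is the eigenvalue event of (A8), intersected
   with the almost-sure one. *)

From HB Require Import structures.
From mathcomp Require Import all_boot all_order all_algebra.
From mathcomp Require Import all_classical all_reals all_analysis.
From mathcomp Require Import ring lra.
Import Order.TTheory GRing.Theory Num.Theory.
Import numFieldNormedType.Exports.
Set Implicit Arguments.
Unset Strict Implicit.
Local Open Scope classical_set_scope.
Local Open Scope ring_scope.

Section DirectionalDerivatives.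
Variables (R : realType) (n : nat).
Implicit Types (f : 'rV[R]_n -> R) (a v w F : 'rV[R]_n).

Lemma is_derive_lineP f a v df :
  is_derive (0 : R) 1 (fun h : R => f (h *: v + a)) df <-> is_derive a v f df.
Proof.
have E : (fun h : R => h^-1 *: ((f \o shift a) (h *: v) - f a)) =
  (fun h : R => h^-1 *: (((fun h0 : R => f (h0 *: v + a)) \o shift 0) (h *: 1)
     - (fun h0 : R => f (h0 *: v + a)) 0)).
  apply/funext => h /=; rewrite scale0r add0r addr0.
  by congr (_ *: (f (_ + _) - _)); congr (_ *: _); rewrite /GRing.scale /= mulr1.
by split=> -[H1 H2]; constructor; move: H1 H2; rewrite /derivable /derive E.
Qed.

Lemma dotp_affine a v F (h : R) : dotp (h *: v + a) F = h * dotp v F + dotp a F.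
Proof.
rewrite /dotp mulr_sumr -big_split /=; apply: eq_bigr => i _.
by rewrite !mxE mulrDl mulrA.
Qed.

Lemma dotp_unitv (j : 'I_n) F : dotp (unitv R j) F = F ord0 j.
Proof.
rewrite /dotp (bigD1 j) //= big1 ?addr0; first by rewrite !mxE !eqxx mul1r.
by move=> i ij; rewrite !mxE eq_sym (negbTE ij) andbF mul0r.
Qed.

Lemma is_derive_affine (x al be : R) : is_derive x 1 (fun h : R => h * al + be) al.
Proof.
have H := is_deriveD (is_deriveM (is_derive_id x (1 : R)) (is_derive_cst al x 1))
  (is_derive_cst be x 1).
by apply: is_derive_eq H _; rewrite /= scaler0 add0r addr0 /GRing.scale /= mulr1.
Qed.

Lemma is_derive_expR_dotp F a v :
  is_derive a v (fun t => expR (dotp t F)) (expR (dotp a F) * dotp v F).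
Proof.
apply/is_derive_lineP.
have -> : (fun h : R => expR (dotp (h *: v + a) F)) =
    expR \o (fun h => h * dotp v F + dotp a F).
  by apply/funext => h; rewrite /= dotp_affine.
have H := is_derive1_comp (is_derive_expR _) (is_derive_affine 0 (dotp v F) (dotp a F)).
by apply: is_derive_eq H _; rewrite mul0r add0r.
Qed.

Section ExpSums.
Variables (N : nat) (F : 'I_N -> 'rV[R]_n).

(* [expsum t] is n_q Nhat(t) when [F] lists the features of the Q-sample. *)
Definition expsum t := \sum_i expR (dotp t (F i)).
Definition expsum1 v t := \sum_i expR (dotp t (F i)) * dotp v (F i).
Definition expsum2 v w t :=
  \sum_i expR (dotp t (F i)) * dotp w (F i) * dotp v (F i).

Lemma expsum_ge0 t : 0 <= expsum t.
Proof. by apply: sumr_ge0 => i _; exact: expR_ge0. Qed.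

Lemma expsum_gt0 t : (0 < N)%N -> 0 < expsum t.
Proof.
move=> N0; rewrite /expsum (bigD1 (Ordinal N0)) //=.
by rewrite ltr_pwDl ?expR_gt0 // sumr_ge0 // => i _; exact: expR_ge0.
Qed.

Lemma is_derive_expsum a v : is_derive a v expsum (expsum1 v a).
Proof.
have := is_derive_sum (fun i => is_derive_expR_dotp (F i) a v).
by rewrite fct_sumE.
Qed.

Lemma is_derive_expsum1 a v w : is_derive a w (expsum1 v) (expsum2 v w a).
Proof.
have Hi i : is_derive a w (fun t => expR (dotp t (F i)) * dotp v (F i))
    (expR (dotp a (F i)) * dotp w (F i) * dotp v (F i)).
  have H := is_deriveM (is_derive_expR_dotp (F i) a w) (is_derive_cst (dotp v (F i)) a w).
  by apply: is_derive_eq H _; rewrite /= scaler0 add0r /GRing.scale /= mulrC.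
by have := is_derive_sum Hi; rewrite fct_sumE.
Qed.

Lemma is_derive_ln_expsum a v :
  is_derive a v (fun t => ln (N%:R^-1 * expsum t)) (expsum1 v a / expsum a).
Proof.
have [N0|N0] := posnP N.
  have E t : expsum t = 0.
    by rewrite /expsum big1 // => -[i hi]; exfalso; move: hi; rewrite N0.
  have -> : (fun t => ln (N%:R^-1 * expsum t)) = cst (ln (N%:R^-1 * 0)).
    by apply/funext => t; rewrite E.
  by rewrite E invr0 !mulr0; exact: is_derive_cst.
apply/is_derive_lineP.
have Hg : is_derive (0 : R) 1 (fun h : R => N%:R^-1 * expsum (h *: v + a))
    (N%:R^-1 * expsum1 v a).
  exact/(is_derive_lineP (fun t => N%:R^-1 * expsum t))/is_deriveZ/is_derive_expsum.
have g0 : 0 < N%:R^-1 * expsum (0 *: v + a).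
  by rewrite mulr_gt0 ?invr_gt0 ?ltr0n ?expsum_gt0.
have H := @is_derive1_comp R (@ln R) (fun h : R => N%:R^-1 * expsum (h *: v + a)) 0 _ _
  (is_derive1_ln g0) Hg.
apply: is_derive_eq H _; rewrite scale0r add0r.
have := expsum_gt0 a N0; have : (0 : R) < N%:R by rewrite ltr0n.
by move=> h1 h2; field; rewrite !lt0r_neq0.
Qed.

End ExpSums.
End DirectionalDerivatives.

Section CauchySchwarz.
Variable R : realFieldType.

Lemma discriminant_le (A B C : R) : 0 <= C ->
  (forall t, 0 <= A + 2 * t * B + t ^+ 2 * C) -> B ^+ 2 <= A * C.
Proof.
move=> C0 H; have [Cp|] := ltP 0 C.
  pose t := - B / C; have Ct : C * t = - B by rewrite /t mulrC divfK // lt0r_neq0.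
  have E : C * (A + 2 * t * B + t ^+ 2 * C) = A * C - B ^+ 2.
    have -> : C * (A + 2 * t * B + t ^+ 2 * C) = A * C + 2 * (C * t) * B + (C * t) ^+ 2.
      by ring.
    by rewrite Ct; ring.
  by have := mulr_ge0 (ltW Cp) (H t); rewrite E subr_ge0.
move=> Cle; have C00 : C = 0 by apply/le_anti; rewrite Cle C0.
subst C.
have [->|Bn] := eqVneq B 0; first by rewrite expr0n /= mulr0.
pose t := - (A + 1) / (2 * B).
have Bt : 2 * t * B = - (A + 1) by rewrite /t; field.
by have h := H t; rewrite mulr0 addr0 Bt in h; lra.
Qed.

Lemma cauchy_schwarz_sum N (p q : 'I_N -> R) :
  (\sum_i p i * q i) ^+ 2 <= (\sum_i p i ^+ 2) * (\sum_i q i ^+ 2).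
Proof.
rewrite mulrC; apply: discriminant_le => [|t].
  by apply: sumr_ge0 => i _; exact: sqr_ge0.
have -> : \sum_i q i ^+ 2 + 2 * t * \sum_i p i * q i + t ^+ 2 * \sum_i p i ^+ 2
    = \sum_i (q i + t * p i) ^+ 2.
  by rewrite !mulr_sumr -!big_split /=; apply: eq_bigr => i _; ring.
by apply: sumr_ge0 => i _; exact: sqr_ge0.
Qed.

Lemma cauchy_schwarz_wsum N (w p : 'I_N -> R) : (forall i, 0 <= w i) ->
  (\sum_i w i * p i) ^+ 2 <= (\sum_i w i * p i ^+ 2) * (\sum_i w i).
Proof.
move=> w0; apply: discriminant_le => [|t]; first exact: sumr_ge0.
have -> : \sum_i w i * p i ^+ 2 + 2 * t * \sum_i w i * p i + t ^+ 2 * \sum_i w i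
    = \sum_i w i * (p i + t) ^+ 2.
  by rewrite !mulr_sumr -!big_split /=; apply: eq_bigr => i _; ring.
by apply: sumr_ge0 => i _; rewrite mulr_ge0 ?sqr_ge0.
Qed.

End CauchySchwarz.

Section WeightedCovariance.
Variables (R : realFieldType) (N : nat) (w : 'I_N -> R).

Definition wcovf (p q : 'I_N -> R) :=
  \sum_i w i * p i * q i - (\sum_i w i * p i) * (\sum_i w i * q i).

Lemma wcovfC p q : wcovf p q = wcovf q p.
Proof. by rewrite /wcovf mulrC; congr (_ - _); apply: eq_bigr => i _; ring. Qed.

Lemma wcovf_suml J (c : 'I_J -> R) (p : 'I_J -> 'I_N -> R) q :
  \sum_j c j * wcovf (p j) q = wcovf (fun i => \sum_j c j * p j i) q.
Proof.
rewrite /wcovf; under eq_bigr do rewrite mulrBr.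
rewrite sumrB; congr (_ - _).
  under eq_bigr do rewrite mulr_sumr.
  rewrite exchange_big /=; apply: eq_bigr => i _.
  by rewrite mulr_sumr mulr_suml; apply: eq_bigr => j _; ring.
under eq_bigr do rewrite mulrA.
rewrite -mulr_suml; congr (_ * _).
under eq_bigr do rewrite mulr_sumr.
rewrite exchange_big /=; apply: eq_bigr => i _.
by rewrite mulr_sumr; apply: eq_bigr => j _; ring.
Qed.

Lemma wcovf_sqrD p q t :
  wcovf (fun i => p i + t * q i) (fun i => p i + t * q i) =
  wcovf p p + 2 * t * wcovf p q + t ^+ 2 * wcovf q q.
Proof.
have E1 : \sum_i w i * (p i + t * q i) * (p i + t * q i) =
    \sum_i w i * p i * p i + 2 * t * \sum_i w i * p i * q i
    + t ^+ 2 * \sum_i w i * q i * q i.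
  by rewrite !mulr_sumr -!big_split /=; apply: eq_bigr => i _; ring.
have E2 : \sum_i w i * (p i + t * q i) = \sum_i w i * p i + t * \sum_i w i * q i.
  by rewrite !mulr_sumr -!big_split /=; apply: eq_bigr => i _; ring.
by rewrite /wcovf E1 E2; ring.
Qed.

Lemma wcovf_sqrE p :
  wcovf p p = \sum_i w i * p i ^+ 2 - (\sum_i w i * p i) ^+ 2.
Proof.
by rewrite /wcovf expr2; congr (_ - _); apply: eq_bigr => i _; rewrite expr2 mulrA.
Qed.

Lemma wcovf_le p : wcovf p p <= \sum_i w i * p i ^+ 2.
Proof. by rewrite wcovf_sqrE lerBlDr lerDl sqr_ge0. Qed.

Hypotheses (w_ge0 : forall i, 0 <= w i) (sum_w_le1 : \sum_i w i <= 1).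

Lemma wcovf_ge0 p : 0 <= wcovf p p.
Proof.
rewrite wcovf_sqrE subr_ge0.
apply: le_trans (cauchy_schwarz_wsum p w_ge0) _.
rewrite ler_piMr // sumr_ge0 // => i _.
by rewrite mulr_ge0 ?sqr_ge0.
Qed.

Lemma wcovf_cauchy_schwarz p q : wcovf p q ^+ 2 <= wcovf p p * wcovf q q.
Proof.
apply: discriminant_le; first exact: wcovf_ge0.
by move=> t; rewrite -wcovf_sqrD; exact: wcovf_ge0.
Qed.

End WeightedCovariance.

Section SpectralNorm.
Variables (R : realType) (n : nat).
Implicit Types (x v : 'cV[R]_n) (M : 'M[R]_n).

Definition sqnorm x := \sum_i x i ord0 ^+ 2.

Lemma sqnorm_ge0 x : 0 <= sqnorm x.
Proof. by apply: sumr_ge0 => i _; exact: sqr_ge0. Qed.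

Lemma sqnorm0 : sqnorm 0 = 0.
Proof. by rewrite /sqnorm big1 // => i _; rewrite mxE expr0n. Qed.

Lemma sqnormZ c x : sqnorm (c *: x) = c ^+ 2 * sqnorm x.
Proof. by rewrite /sqnorm mulr_sumr; apply: eq_bigr => i _; rewrite mxE exprMn. Qed.

Lemma sqnorm_eq0 x : (sqnorm x == 0) = (x == 0).
Proof.
rewrite /sqnorm psumr_eq0 => [|i _]; last exact: sqr_ge0.
apply/allP/eqP => [x0|->]; last by move=> i _; rewrite mxE expr2 mulr0 eqxx.
apply/matrixP => i j; rewrite (ord1 j) mxE.
by move/(_ i (mem_index_enum _)): x0; rewrite sqrf_eq0 => /eqP.
Qed.

Lemma vnorm_cV x : vnorm x = Num.sqrt (sqnorm x).
Proof.
by rewrite /vnorm /sqnorm; congr Num.sqrt; apply: eq_bigr => i _; rewrite big_ord1.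
Qed.

Lemma vnorm_ge0 x : 0 <= vnorm x.
Proof. by rewrite vnorm_cV sqrtr_ge0. Qed.

Lemma sqr_vnorm x : vnorm x ^+ 2 = sqnorm x.
Proof. by rewrite vnorm_cV sqr_sqrtr // sqnorm_ge0. Qed.

Lemma vnorm_le1 x : (vnorm x <= 1) = (sqnorm x <= 1).
Proof. by rewrite vnorm_cV -{1}sqrtr1 ler_sqrt. Qed.

Lemma vnormZ c x : vnorm (c *: x) = `|c| * vnorm x.
Proof. by rewrite !vnorm_cV sqnormZ sqrtrM ?sqr_ge0 // sqrtr_sqr. Qed.

Lemma dot_le_vnorm (x y : 'cV[R]_n) :
  \sum_j x j ord0 * y j ord0 <= vnorm x * vnorm y.
Proof.
rewrite !vnorm_cV -sqrtrM ?sqnorm_ge0 //; apply: le_trans (ler_norm _) _.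
by rewrite -sqrtr_sqr ler_sqrt ?mulr_ge0 ?sqnorm_ge0 ?cauchy_schwarz_sum.
Qed.

Let unit_ball_image M :=
  [set vnorm (M *m v) | v in [set v : 'cV[R]_n | vnorm v <= 1]].

Lemma unit_ball_image_ubound M : has_ubound (unit_ball_image M).
Proof.
exists (Num.sqrt (\sum_j \sum_k M j k ^+ 2)) => _ [v /= + <-].
rewrite vnorm_le1 => v1; rewrite vnorm_cV ler_sqrt; last first.
  by do 2!apply: sumr_ge0 => ? _; exact: sqr_ge0.
apply: ler_sum => j _; rewrite mxE; apply: le_trans (cauchy_schwarz_sum _ _) _.
by rewrite ler_piMr ?sumr_ge0 // => k _; exact: sqr_ge0.
Qed.

Lemma vnorm_mulmx_le_specnorm M v : vnorm v <= 1 -> vnorm (M *m v) <= specnorm M.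
Proof. by move=> v1; apply: ub_le_sup (unit_ball_image_ubound M) _ _; exists v. Qed.

Lemma specnorm_ge0 M : 0 <= specnorm M.
Proof.
apply: le_trans (vnorm_mulmx_le_specnorm M (v := 0) _); first exact: vnorm_ge0.
by rewrite vnorm_le1 sqnorm0.
Qed.

Lemma specnorm_le M K : (forall v, vnorm v <= 1 -> vnorm (M *m v) <= K) ->
  specnorm M <= K.
Proof.
move=> MK; apply: ge_sup => [|_ [v v1 <-]]; last exact: MK.
by exists (vnorm (M *m (0 : 'cV[R]_n))), 0 => //=; rewrite vnorm_le1 sqnorm0.
Qed.

Lemma vnorm_mulmx_le M x : vnorm (M *m x) <= specnorm M * vnorm x.
Proof.
have [->|x0] := eqVneq x 0; first by rewrite mulmx0 !vnorm_cV sqnorm0 sqrtr0 mulr0.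
have xp : 0 < vnorm x by rewrite vnorm_cV sqrtr_gt0 lt0r sqnorm_eq0 x0 sqnorm_ge0.
have := vnorm_mulmx_le_specnorm M (v := (vnorm x)^-1 *: x).
rewrite -scalemxAr !vnormZ ger0_norm ?invr_ge0 ?vnorm_ge0 // mulVf ?gt_eqF //.
by rewrite -ler_pdivrMr // mulrC => /(_ (lexx _)).
Qed.

End SpectralNorm.

Section CovarianceMatrix.
Variables (R : realType) (n N : nat) (a : 'I_N -> 'rV[R]_n) (w : 'I_N -> R).
Implicit Types (x v : 'cV[R]_n).

Definition coordf (j : 'I_n) (i : 'I_N) := a i ord0 j.
Definition projf x (i : 'I_N) := \sum_j a i ord0 j * x j ord0.
Definition wcov : 'M[R]_n := \matrix_(j, k) wcovf w (coordf j) (coordf k).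

Lemma projfE x : projf x = (fun i => \sum_j x j ord0 * coordf j i).
Proof. by apply/funext => i; apply: eq_bigr => j _; rewrite mulrC. Qed.

Lemma wcov_mulmx x j : (wcov *m x) j ord0 = wcovf w (coordf j) (projf x).
Proof.
rewrite mxE (eq_bigr (fun k => x k ord0 * wcovf w (coordf k) (coordf j))).
  by rewrite wcovf_suml -projfE wcovfC.
by move=> k _; rewrite mxE mulrC wcovfC.
Qed.

Lemma sqnorm_wcov_mulmx v :
  sqnorm (wcov *m v) = wcovf w (projf (wcov *m v)) (projf v).
Proof.
rewrite /sqnorm (eq_bigr (fun j => (wcov *m v) j ord0 * wcovf w (coordf j) (projf v))).
  by rewrite wcovf_suml -projfE.
by move=> j _; rewrite expr2 wcov_mulmx.
Qed.

Lemma emp_second_quadE x :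
  N%:R^-1 * \sum_i projf x i ^+ 2 = \sum_j x j ord0 * (emp_second a *m x) j ord0.
Proof.
have emp_secondE j k : emp_second a j k = N%:R^-1 * \sum_i a i ord0 j * a i ord0 k.
  rewrite /emp_second mxE summxE; congr (_ * _); apply: eq_bigr => i _.
  by rewrite mxE big_ord1 !mxE.
have -> : \sum_j x j ord0 * (emp_second a *m x) j ord0 =
    \sum_j \sum_k \sum_i N%:R^-1 * (a i ord0 j * x j ord0 * (a i ord0 k * x k ord0)).
  apply: eq_bigr => j _; rewrite mxE mulr_sumr; apply: eq_bigr => k _.
  by rewrite emp_secondE mulr_sumr mulr_suml mulr_sumr; apply: eq_bigr => i _; ring.
symmetry; under eq_bigr do rewrite exchange_big /=.
rewrite exchange_big /= mulr_sumr; apply: eq_bigr => i _.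
rewrite /projf expr2 mulr_suml mulr_sumr; apply: eq_bigr => j _.
by rewrite !mulr_sumr; apply: eq_bigr => k _; ring.
Qed.

End CovarianceMatrix.

Section CovarianceBound.
Variables (R : realType) (n N : nat) (a : 'I_N -> 'rV[R]_n) (w : 'I_N -> R).
Variables (C D : R).
Hypotheses (w_ge0 : forall i, 0 <= w i) (sum_w_le1 : \sum_i w i <= 1).
Hypotheses (w_le : forall i, w i <= C / N%:R) (C_ge0 : 0 <= C).
Hypothesis second_le : specnorm (emp_second a) <= D.

Lemma emp_second_quad_le x : N%:R^-1 * \sum_i projf a x i ^+ 2 <= D * sqnorm x.
Proof.
rewrite emp_second_quadE; apply: le_trans (dot_le_vnorm _ _) _.
apply: le_trans (ler_wpM2l (vnorm_ge0 x) (vnorm_mulmx_le _ x)) _.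
by rewrite -sqr_vnorm mulrCA -expr2 ler_wpM2r ?sqr_ge0.
Qed.

Lemma wcovf_projf_le x : wcovf w (projf a x) (projf a x) <= C * D * sqnorm x.
Proof.
apply: le_trans (wcovf_le w _) _.
apply: (@le_trans _ _ (\sum_i C / N%:R * projf a x i ^+ 2)).
  by apply: ler_sum => i _; rewrite ler_wpM2r ?sqr_ge0.
by rewrite -mulr_sumr -!mulrA ler_wpM2l // emp_second_quad_le.
Qed.

Lemma specnorm_wcov_le : specnorm (wcov a w) <= C * D.
Proof.
have CD0 : 0 <= C * D by rewrite mulr_ge0 // (le_trans (specnorm_ge0 _) second_le).
apply: specnorm_le => v; rewrite vnorm_le1 => v1.
set u := wcov a w *m v.
have u_le : sqnorm u ^+ 2 <= (C * D) ^+ 2 * sqnorm u.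
  rewrite {1}sqnorm_wcov_mulmx.
  apply: le_trans (wcovf_cauchy_schwarz w_ge0 sum_w_le1 _ _) _.
  apply: le_trans (ler_pM (wcovf_ge0 w_ge0 sum_w_le1 _) (wcovf_ge0 w_ge0 sum_w_le1 _)
    (wcovf_projf_le u) (wcovf_projf_le v)) _.
  by rewrite mulrACA -expr2 ler_wpM2l ?sqr_ge0 // ler_piMr ?sqnorm_ge0.
have {u_le} u_le : sqnorm u <= (C * D) ^+ 2.
  have [->|u0] := eqVneq (sqnorm u) 0; first exact: sqr_ge0.
  by move: u_le; rewrite expr2 ler_pM2r // lt0r u0 sqnorm_ge0.
by rewrite vnorm_cV -(ger0_norm CD0) -sqrtr_sqr ler_sqrt ?sqr_ge0.
Qed.

End CovarianceBound.

Section LogRatioLoss.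
Variables (R : realType) (n np nq : nat).
Variables (G : 'I_np -> 'rV[R]_n) (F : 'I_nq -> 'rV[R]_n).

Definition lin_loss t := - (np%:R^-1 * \sum_i dotp t (G i)).
Definition logratio_loss t := lin_loss t + ln (nq%:R^-1 * expsum F t).
Definition logratio_loss_d1 v t := lin_loss v + expsum1 F v t / expsum F t.
Definition logratio_loss_d2 v w t :=
  expsum2 F v w t / expsum F t - expsum1 F v t * expsum1 F w t / expsum F t ^+ 2.

Lemma is_derive_lin_loss a v : is_derive a v lin_loss (lin_loss v).
Proof.
apply/is_derive_lineP.
have -> : (fun h : R => lin_loss (h *: v + a)) = (fun h => h * lin_loss v + lin_loss a).
  apply/funext => h; rewrite /lin_loss.
  by under eq_bigr do rewrite dotp_affine; rewrite big_split /= -mulr_sumr; ring.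
exact: is_derive_affine.
Qed.

Lemma is_derive_logratio_loss a v :
  is_derive a v logratio_loss (logratio_loss_d1 v a).
Proof. exact: is_deriveD (is_derive_lin_loss a v) (is_derive_ln_expsum F a v). Qed.

Lemma is_derive_logratio_loss_d1 a v w :
  is_derive a w (logratio_loss_d1 v) (logratio_loss_d2 v w a).
Proof.
have [N0|N0] := posnP nq.
  have E u t : expsum F t = 0 /\ expsum1 F u t = 0 /\ expsum2 F v u t = 0.
    by rewrite /expsum /expsum1 /expsum2 !big1 //
      => -[i hi]; exfalso; move: hi; rewrite N0.
  have -> : logratio_loss_d1 v = cst (lin_loss v).
    by apply/funext => t; rewrite /logratio_loss_d1 (proj1 (E v t)) invr0 mulr0 addr0.
  rewrite /logratio_loss_d2; have [-> [-> ->]] := E w a.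
  by rewrite invr0 !mulr0 !mul0r subr0; exact: is_derive_cst.
have S0 : expsum F a != 0 by rewrite gt_eqF ?expsum_gt0.
have HV : is_derive a w (fun t => (expsum F t)^-1) (- (expsum F a) ^- 2 *: expsum1 F w a).
  have [dS <-] := is_derive_expsum F a w.
  by constructor; [exact: derivableV | rewrite deriveV].
have H := is_deriveD (is_derive_cst (lin_loss v) a w)
  (is_deriveM (is_derive_expsum1 F a v w) HV).
by apply: is_derive_eq H _; rewrite /logratio_loss_d2 /= add0r /GRing.scale /=; field.
Qed.

Definition gibbs t (i : 'I_nq) := expR (dotp t (F i)) / expsum F t.

Lemma gibbs_ge0 t i : 0 <= gibbs t i.
Proof. by rewrite divr_ge0 ?expR_ge0 ?expsum_ge0. Qed.

Lemma sum_gibbs_le1 t : \sum_i gibbs t i <= 1.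
Proof.
rewrite -mulr_suml; have [->|S0] := eqVneq (expsum F t) 0.
  by rewrite invr0 mulr0 ler01.
by rewrite mulfV.
Qed.

Lemma gibbs_le t C :
  (forall i, expR (dotp t (F i)) / (nq%:R^-1 * expsum F t) <= C) ->
  forall i, gibbs t i <= C / nq%:R.
Proof.
move=> rC i; have nq0 : (0 < nq)%N by apply: leq_ltn_trans (ltn_ord i).
have S0 := expsum_gt0 F t nq0.
have -> : gibbs t i = expR (dotp t (F i)) / (nq%:R^-1 * expsum F t) / nq%:R.
  by rewrite /gibbs; field; rewrite !gt_eqF // ltr0n.
by rewrite ler_wpM2r ?invr_ge0.
Qed.

Lemma hessian_logratio_loss t : hessian logratio_loss t = wcov F (gibbs t).
Proof.
apply/matrixP => j k; rewrite !mxE.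
have -> : (fun s => derive logratio_loss s (unitv R k)) = logratio_loss_d1 (unitv R k).
  apply/funext => s.
  exact: (@derive_val _ _ _ _ _ _ _ (is_derive_logratio_loss s (unitv R k))).
have := is_derive_logratio_loss_d1 t (unitv R k) (unitv R j).
move=> /(@derive_val _ _ _ _ _ _ _) ->.
have E2 l : \sum_i gibbs t i * coordf F l i = expsum1 F (unitv R l) t / expsum F t.
  by rewrite /expsum1 mulr_suml; apply: eq_bigr => i _; rewrite dotp_unitv mulrAC.
have E1 : \sum_i gibbs t i * coordf F j i * coordf F k i =
    expsum2 F (unitv R k) (unitv R j) t / expsum F t.
  rewrite /expsum2 mulr_suml; apply: eq_bigr => i _.
  by rewrite !dotp_unitv /gibbs /coordf; ring.
by rewrite /wcovf E1 !E2 /logratio_loss_d2 -exprVn; ring.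
Qed.

End LogRatioLoss.

Lemma probability_setI_prob1 (R : realType) (d : measure_display) (T : measurableType d)
  (Pr : probability T R) (A B : set T) :
  measurable A -> measurable B -> Pr B = 1%E -> Pr (A `&` B) = Pr A.
Proof.
move=> mA mB PB1; rewrite (measureDI Pr mA mB) -[LHS]add0e; congr (_ + _)%E.
apply/esym/le_anti; rewrite measure_ge0 andbT.
have <- : Pr (~` B) = 0%E by rewrite probability_setC // PB1 subee.
by apply: le_measure; rewrite ?inE //; [exact: measurableD | exact: measurableC].
Qed.

Theorem proposition5 (R : realType) (m b np nq : nat)
  (psi : R -> R -> 'rV[R]_b)
  (P Q : probability (Rm R m) R)
  (d : measure_display) (Omega : measurableType d) (Pr : probability Omega R)
  (xp : 'I_np -> Omega -> Rm R m) (xq : 'I_nq -> Omega -> Rm R m)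
  (thstar : 'rV[R]_(Dim m b))
  (Cmin Cmax Cratio : R) (Cf : Etype m -> R)
  (Dmax1 Dmax2 Dmin2 deltanq : R)
  (* sampling: x_p^(i) i.i.d. ~ P, x_q^(i) i.i.d. ~ Q *)
  (hxp : forall i, has_law Pr (xp i) P)
  (hxq : forall i, has_law Pr (xq i) Q)
  (hind : mutually_indep Pr (all_samples xp xq))
  (* theta^* is the true parameter: p = q r(.; theta^* ) *)
  (htrue : forall A : set (Rm R m), measurable A ->
     P A = (\int[Q]_(x in A) (r_model psi Q thstar x)%:E)%E)
  (* (A7) *)
  (hA7r : forall delta : 'rV[R]_(Dim m b), vnorm delta <= vnorm thstar ->
     forall x : 'rV[R]_m,
       0 < Cmin /\ Cmin <= r_model psi Q (thstar + delta) x /\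
       r_model psi Q (thstar + delta) x <= Cmax)
  (hA7rhat : forall delta : 'rV[R]_(Dim m b), vnorm delta <= vnorm thstar ->
     forall (w : Omega) (x : 'rV[R]_m),
       Cratio^-1 <= rhat psi (fun i => xq i w) (thstar + delta) x /\
       rhat psi (fun i => xq i w) (thstar + delta) x <= Cratio)
  (hA7f : forall (t : Etype m) (x : 'rV[R]_m), vnorm (feat_t psi t x) <= Cf t)
  (* (A8), almost-sure part *)
  (hA8as : exists A : set Omega, measurable A /\ Pr A = 1%E /\
     forall w, A w ->
       (forall t : Etype m,
          (nq%:R)^-1 * \sum_(i < nq) vnorm (feat_t psi t (xq i w)) <= Dmax1) /\
       specnorm (emp_second (fun i => feat psi (xq i w))) <= Dmax2 /\
       specnorm (emp_cov (fun i => feat psi (xq i w))) <= Dmax2)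
  (* (A8), minimal eigenvalue on the support S *)
  (hDmin : 0 < Dmin2)
  (hA8min : exists A : set Omega, measurable A /\ ((1 - deltanq)%:E <= Pr A)%E /\
     forall w, A w ->
       Dmin2 <= lambda_min
                  (emp_cov (fun i => subvec (supp thstar) (feat psi (xq i w))))) :
  forall delta : 'rV[R]_(Dim m b), vnorm delta <= vnorm thstar ->
    exists A : set Omega, measurable A /\ ((1 - deltanq)%:E <= Pr A)%E /\
      forall w, A w ->
        specnorm (hessian (loss psi (fun i => xp i w) (fun i => xq i w))
                          (thstar + delta))
          <= 2 * Cratio * Dmax2.
Proof.
move=> delta hdelta.
have [A1 [mA1 [PA1 _]]] := hA8min.
have [A2 [mA2 [PA2 HA2]]] := hA8as.
exists (A1 `&` A2); split; first exact: measurableI.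
split; first by rewrite probability_setI_prob1.
move=> w [_ /HA2 [_ [second_le _]]].
set th := thstar + delta; set F := fun i => feat psi (xq i w).
have C_ge0 : 0 <= Cratio.
  apply: le_trans (hA7rhat delta hdelta w 0).2.
  by rewrite divr_ge0 ?expR_ge0 ?mulr_ge0 ?invr_ge0 ?expsum_ge0.
have D_ge0 : 0 <= Dmax2 := le_trans (specnorm_ge0 _) second_le.
rewrite (hessian_logratio_loss (fun i => feat psi (xp i w)) F th).
apply: le_trans (specnorm_wcov_le (@gibbs_ge0 _ _ _ F th) (sum_gibbs_le1 F th)
  (gibbs_le (fun i => (hA7rhat delta hdelta w (xq i w)).2)) C_ge0 second_le) _.
by rewrite -mulrA ler_peMl ?mulr_ge0 // ler1n.
Qed.
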